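(* Let $A\in\mathbb{C}^{n\times n}$, $B\in\mathbb{C}^{n\times m}$, $C\in\mathbb{C}^{p\times n}$, $D\in\mathbb{C}^{p\times m}$ and $F\in\mathbb{C}^{\nu\times\nu}$, and suppose $\mathrm{eig}(A)\cap\mathrm{eig}(F)=\emptyset$. The following statements are equivalent: (i) $\mathcal{R}_\Sigma(\lambda)$ has full row rank $n+p$ for all $\lambda\in\mathrm{eig}(F)$; (ii) for every pair $(P,Q)\in\mathbb{C}^{n\times\nu}\times\mathbb{C}^{p\times\nu}$, the system of equations $$\Pi F = A\Pi + B\Psi + P,\qquad 0 = C\Pi + D\Psi + Q$$ admits a solution $(\Pi,\Psi)\in\mathbb{C}^{n\times\nu}\times\mathbb{C}^{m\times\nu}$; (iii) for every pair $(\bar P,\bar Q)\in\mathbb{C}^{\nu\times n}\times\mathbb{C}^{\nu\times m}$ for which the system of equations $$MA = FM + GC + \bar P,\qquad 0 = -MB + GD + \bar Q$$ admits a solution $(M,G)\in\mathbb{C}^{\nu\times n}\times\mathbb{C}^{\nu\times p}$, this solution is unique; (iv) the linear map $\mathcal{C}_{\rm p}:\mathbb{C}^{m\times\nu}\to\mathbb{C}^{p\times\nu}$ is surjective; (v) the linear map $\mathcal{C}_{\rm d}:\mathbb{C}^{\nu\times p}\to\mathbb{C}^{\nu\times m}$ is injective. Moreover, for any $G\in\mathbb{C}^{\nu\times p}$: (a) if $(F,G)$ is controllable and (i) holds, then $(F,\mathcal{C}_{\rm d}(G))$ is controllable; (b) if $(F,G)$ is stabilizable and $\mathcal{R}_\Sigma(\lambda)$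 has full row rank for all $\lambda\in\mathrm{eig}(F)\cap\mathbb{C}_{\geq 0}$, then $(F,\mathcal{C}_{\rm d}(G))$ is stabilizable. Furthermore, the converse of (a) holds (i.e., $(F,\mathcal{C}_{\rm d}(G))$ controllable implies $(F,G)$ controllable and (i)) provided $G^{\sf T}\ker(\lambda I_\nu - F^{\sf T})=\mathbb{C}^p$ for all $\lambda\in\mathrm{eig}(F)$; and the converse of (b) holds (i.e., $(F,\mathcal{C}_{\rm d}(G))$ stabilizable implies $(F,G)$ stabilizable and $\mathcal{R}_\Sigma(\lambda)$ has full row rank for all $\lambda\in\mathrm{eig}(F)\cap\mathbb{C}_{\ge 0}$) provided $G^{\sf T}\ker(\lambda I_\nu - F^{\sf T})=\mathbb{C}^p$ for all $\lambda\in\mathrm{eig}(F)\cap\mathbb{C}_{\geq 0}$.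
   Context: Data: $A\in\mathbb{C}^{n\times n}$, $B\in\mathbb{C}^{n\times m}$, $C\in\mathbb{C}^{p\times n}$, $D\in\mathbb{C}^{p\times m}$, $F\in\mathbb{C}^{\nu\times\nu}$, with $\mathrm{eig}(A)\cap\mathrm{eig}(F)=\emptyset$. The Rosenbrock system matrix is $\mathcal{R}_\Sigma(\lambda)=\begin{bmatrix}A-\lambda I_n & B\\ C & D\end{bmatrix}\in\mathbb{C}^{(n+p)\times(n+m)}$ for $\lambda\in\mathbb{C}$. The steady-state cascade (SSC) operators are defined as follows: for $H\in\mathbb{C}^{m\times\nu}$, $\mathcal{C}_{\rm p}(H)=C\Pi+DH$, where $\Pi\in\mathbb{C}^{n\times\nu}$ is the unique solution of the Sylvester equation $\Pi F - A\Pi = BH$; for $G\in\mathbb{C}^{\nu\times p}$, $\mathcal{C}_{\rm d}(G)=-MB+GD$, where $M\in\mathbb{C}^{\nu\times n}$ is the unique solution of $MA-FM=GC$. $\mathbb{C}_{\geq 0}$ is the set of complex numbers with nonnegative real part. For a matrix $G$ and subspace $\mathcal{V}$, $G^{\sf T}\mathcal{V}=\{G^{\sf T}v: v\in\mathcal{V}\}$. A pair $(F,G)$ is stabilizable if every eigenvalue $\lambda$ of $F$ with $\mathrm{Re}\,\lambda\ge 0$ is controllable, i.e., $\varphi^{\sf T}G\neq 0$ for every nonzero $\varphi$ with $\varphi^{\sf T}F=\lambda\varphi^{\sf T}$. *)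

From HB Require Import structures.
From mathcomp Require Import all_boot all_order all_algebra.
From Stdlib Require Import ClassicalEpsilon.
Set Implicit Arguments. Unset Strict Implicit. Unset Printing Implicit Defensive.
Import Order.TTheory GRing.Theory Num.Theory.
Local Open Scope ring_scope.

Section Defs.
Variable C : numClosedFieldType.

Definition disjoint_spectra (n nu : nat) (A : 'M[C]_n) (F : 'M[C]_nu) : Prop :=
  forall l : C, eigenvalue A l -> ~ eigenvalue F l.

Definition rosenbrock (n m p : nat) (A : 'M[C]_n) (B : 'M[C]_(n, m))
    (Cm : 'M[C]_(p, n)) (D : 'M[C]_(p, m)) (l : C) : 'M[C]_(n + p, n + m) :=
  block_mx (A - l%:M) B Cm D.

(* Π : the (unique, under disjoint spectra) solution of Π F - A Π = B H *)
Definition sylv_p (n m nu : nat) (A : 'M[C]_n) (B : 'M[C]_(n, m)) (F : 'M[C]_nu)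
    (H : 'M[C]_(m, nu)) : 'M[C]_(n, nu) :=
  epsilon (inhabits 0) (fun Pi : 'M[C]_(n, nu) => Pi *m F - A *m Pi = B *m H).

(* M : the (unique, under disjoint spectra) solution of M A - F M = G C *)
Definition sylv_d (n p nu : nat) (A : 'M[C]_n) (Cm : 'M[C]_(p, n)) (F : 'M[C]_nu)
    (G : 'M[C]_(nu, p)) : 'M[C]_(nu, n) :=
  epsilon (inhabits 0) (fun M : 'M[C]_(nu, n) => M *m A - F *m M = G *m Cm).

Definition SSC_p (n m p nu : nat) (A : 'M[C]_n) (B : 'M[C]_(n, m))
    (Cm : 'M[C]_(p, n)) (D : 'M[C]_(p, m)) (F : 'M[C]_nu)
    (H : 'M[C]_(m, nu)) : 'M[C]_(p, nu) :=
  Cm *m sylv_p A B F H + D *m H.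

Definition SSC_d (n m p nu : nat) (A : 'M[C]_n) (B : 'M[C]_(n, m))
    (Cm : 'M[C]_(p, n)) (D : 'M[C]_(p, m)) (F : 'M[C]_nu)
    (G : 'M[C]_(nu, p)) : 'M[C]_(nu, m) :=
  - sylv_d A Cm F G *m B + G *m D.

Definition ctrb_eig (nu q : nat) (F : 'M[C]_nu) (G : 'M[C]_(nu, q)) (l : C) : Prop :=
  forall phi : 'rV[C]_nu, phi != 0 -> phi *m F = l *: phi -> phi *m G != 0.

(* (F, G) controllable: every eigenvalue of F is controllable (PBH test). *)
Definition controllable (nu q : nat) (F : 'M[C]_nu) (G : 'M[C]_(nu, q)) : Prop :=
  forall l : C, eigenvalue F l -> ctrb_eig F G l.

Definition stabilizable (nu q : nat) (F : 'M[C]_nu) (G : 'M[C]_(nu, q)) : Prop :=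
  forall l : C, eigenvalue F l -> 0 <= 'Re l -> ctrb_eig F G l.

(* G^T ker(λ I - F^T) = C^p  (vectors of C^p written as row vectors y^T) *)
Definition GT_ker_full (nu p : nat) (F : 'M[C]_nu) (G : 'M[C]_(nu, p)) (l : C) : Prop :=
  forall y : 'rV[C]_p, exists phi : 'rV[C]_nu, phi *m F = l *: phi /\ phi *m G = y.

End Defs.

(* If X F = A X then X p(F) = p(A) X for every polynomial p; with p the
   characteristic polynomial of F, p(F) = 0 while p(A) is invertible because
   eig(A) and eig(F) are disjoint, so X = 0.  Hence both Sylvester maps
   X |-> X F - A X and M |-> M A - F M are bijective (each is, up to sign, the
   adjoint of the other for the trace pairing), Pi and M depend linearly on H and G, and C_d is
   the adjoint of C_p: tr (C_d(G) H) = tr (G C_p(H)).  This gives (iv) <-> (v);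
   (ii) and (iii) are the affine versions of (iv) and (v).
   The link with the Rosenbrock matrix is the identity
   [- Y, Z] R(l) = [0, - Y B + Z D]  whenever  Y (A - l) = Z C,
   applied to Y = phi M, Z = phi G for a left eigenvector phi of F (which gives
   (a), (b) and their converses), and to Y = M, Z = G for an eigenmatrix
   F G = l G; the kernel of C_d is stable under G |-> F G, so when nonzero it
   contains such an eigenmatrix, and (i) -> (v) follows.  Conversely, a left null
   vector (x, y) of R(l) and a right eigenvector w of F give w y in ker C_d. *)

From HB Require Import structures.
From mathcomp Require Import all_boot all_order all_algebra.
From Stdlib Require Import ClassicalEpsilon.
Set Implicit Arguments. Unset Strict Implicit. Unset Printing Implicit Defensive.
Import Order.TTheory GRing.Theory Num.Theory.
Local Open Scope ring_scope.

Section Eigenvalues.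
Variable K : fieldType.

Lemma eigenvalue_Nunitmx n (A : 'M[K]_n) a : eigenvalue A a = (A - a%:M \notin unitmx).
Proof. by rewrite /eigenvalue /eigenspace kermx_eq0 row_free_unit. Qed.

Lemma eigenvalue_tr n (A : 'M[K]_n) a : eigenvalue A^T a = eigenvalue A a.
Proof. by rewrite !eigenvalue_Nunitmx -unitmx_tr linearB /= trmxK tr_scalar_mx. Qed.

Lemma mulmx_shift_eq0 n k (A : 'M[K]_n) a (x : 'M[K]_(k, n)) :
  ~ eigenvalue A a -> x *m (A - a%:M) = 0 -> x = 0.
Proof.
move=> /negP; rewrite eigenvalue_Nunitmx negbK => Aa_unit xAa0.
by rewrite -(mulmxK Aa_unit x) xAa0 mul0mx.
Qed.

Lemma eigenvalue_col n (A : 'M[K]_n) a :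
  eigenvalue A a -> exists2 w : 'cV_n, w != 0 & A *m w = a *: w.
Proof.
rewrite -eigenvalue_tr => /eigenvalueP [v vA v_neq0]; exists v^T.
  by rewrite -trmx_eq0 trmxK.
by rewrite -[A]trmxK -trmx_mul vA linearZ.
Qed.

Lemma eigenvalue_mulmx n k (A : 'M[K]_n) a (G : 'M[K]_(n, k)) :
  G != 0 -> A *m G = a *: G -> eigenvalue A a.
Proof.
move=> G_neq0 AG; rewrite eigenvalue_Nunitmx; apply: contra G_neq0 => Aa_unit.
by rewrite -(mulKmx Aa_unit G) mulmxBl AG mul_scalar_mx subrr mulmx0.
Qed.

Lemma cV_mulmx_eq0 a b (w : 'cV[K]_a) (y : 'rV[K]_b) : w != 0 -> w *m y = 0 -> y = 0.
Proof.
move=> w_neq0 wy0; apply: trmx_inj; rewrite trmx0.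
have wT_free : row_free w^T by rewrite /row_free rank_rV trmx_eq0 w_neq0.
by apply: (row_free_inj wT_free); rewrite mul0mx -trmx_mul wy0 trmx0.
Qed.
End Eigenvalues.

Section TracePairing.
Variable K : fieldType.

Lemma mxvec_mul_tr a b (X W : 'M[K]_(a, b)) :
  mxvec X *m (mxvec W)^T = (\tr (X *m W^T))%:M.
Proof.
rewrite [LHS]mx11_scalar; congr (_%:M); rewrite !mxE.
rewrite (reindex _ (curry_mxvec_bij _ _)) /= /mxtrace.
under [RHS]eq_bigr do rewrite mxE.
by rewrite pair_bigA; apply: eq_bigr => -[i j] _ /=; rewrite !mxE !mxvecE.
Qed.

Lemma mxtrace_mul_eq0 a b (X : 'M[K]_(a, b)) :
  (forall Y, \tr (X *m Y) = 0) -> X = 0.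
Proof.
move=> trX0; apply/matrixP => i j; rewrite mxE.
have := congr1 (fun M : 'M_1 => M 0 0) (mxvec_mul_tr X (delta_mx i j)).
by rewrite /= trX0 mxvec_delta trmx_delta -colE !mxE mxvecE mul0rn => ->.
Qed.

Variables a b c d : nat.
Variables (f : 'M[K]_(a, b) -> 'M[K]_(c, d)) (g : 'M[K]_(d, c) -> 'M[K]_(b, a)).
Hypothesis fg_adjoint : forall Y X, \tr (g Y *m X) = \tr (Y *m f X).

Lemma adjoint_surj_ker0 :
  (forall Z, exists X, f X = Z) -> forall Y, g Y = 0 -> Y = 0.
Proof.
move=> f_surj Y gY0; apply: mxtrace_mul_eq0 => Z.
by have [X <-] := f_surj Z; rewrite -fg_adjoint gY0 mul0mx linear0.
Qed.

Lemma adjoint_ker0_surj :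
  linear f -> (forall Y, g Y = 0 -> Y = 0) -> forall Z, exists X, f X = Z.
Proof.
move=> f_linear g_ker0.
pose fL : {linear _ -> _} := HB.pack f (GRing.isLinear.Build _ _ _ _ f f_linear).
suff /row_fullP [E linE] : row_full (lin_mx fL).
  move=> Z; exists (vec_mx (mxvec Z *m E)).
  by rewrite -[f _]/(fL _) -mx_rV_lin -mulmxA linE mulmx1 mxvecK.
apply: contraT; rewrite /row_full -mxrank_tr -[_ == _]/(row_free _) -kermx_eq0.
case/rowV0Pn => v /sub_kermxP vL0 v_neq0.
have LvT0 : lin_mx fL *m v^T = 0 by rewrite -[lin_mx fL]trmxK -trmx_mul vL0 trmx0.
pose W := vec_mx v : 'M[K]_(c, d).
have trW0 X : \tr (f X *m W^T) = 0.
  have := mxvec_mul_tr (f X) W.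
  rewrite /W vec_mxK -[f X]/(fL X) -mul_vec_lin -mulmxA LvT0 mulmx0.
  by move=> /(congr1 (fun M : 'M_1 => M 0 0)); rewrite !mxE eqxx mulr1n.
have /(congr1 trmx) : W^T = 0.
  by apply/g_ker0/mxtrace_mul_eq0 => X; rewrite fg_adjoint mxtrace_mulC trW0.
rewrite trmxK trmx0 => /(congr1 mxvec); rewrite vec_mxK linear0 => v0.
by rewrite v0 eqxx in v_neq0.
Qed.

End TracePairing.

Section ClosedField.
Variable K : closedFieldType.

Lemma prod_eigen_shift_eq0 nu (F : 'M[K]_nu) :
  exists2 r : seq K, {in r, forall z, eigenvalue F z} & \prod_(z <- r) (F - z%:M) = 0.
Proof.
case: nu F => [|nu] F; first by exists [::]; rewrite ?flatmx0.
have [r charF] := closed_field_poly_normal (char_poly F).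
rewrite (monicP (char_poly_monic F)) scale1r in charF.
exists r => [z zr|].
  rewrite eigenvalue_root_char charF /root horner_prod prodf_seq_eq0.
  by apply/hasP; exists z => //; rewrite !hornerE subrr.
have := Cayley_Hamilton F; rewrite charF rmorph_prod => <-.
by apply: eq_bigr => z _; rewrite rmorphB /= horner_mx_X horner_mx_C.
Qed.

Lemma mulmx_prod_shift n nu (A : 'M[K]_n) (F : 'M[K]_nu) (X : 'M[K]_(n, nu))
    (s : seq K) :
  X *m F = A *m X -> X *m \prod_(z <- s) (F - z%:M) = \prod_(z <- s) (A - z%:M) *m X.
Proof.
move=> XF; elim: s => [|z s IHs]; first by rewrite !big_nil mulmx1 mul1mx.
by rewrite !big_cons -!mulmxE mulmxA mulmxBr XF scalar_mxC -mulmxBl -!mulmxA IHs.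
Qed.

Lemma shift_stable_eigenmx nu k (F : 'M[K]_nu) (S : 'M[K]_(nu, k) -> Prop) G :
  (forall z G, S G -> S ((F - z%:M) *m G)) -> S G -> G != 0 ->
  exists l G', [/\ S G', G' != 0 & F *m G' = l *: G'].
Proof.
(* Peel off the factors of an annihilating product of shifts until one of them
   kills the current matrix. *)
move=> S_shift SG G_neq0; have [r _ prodF0] := prod_eigen_shift_eq0 F.
suff: forall s G, S G -> G != 0 -> \prod_(z <- s) (F - z%:M) *m G = 0 ->
    exists l G', [/\ S G', G' != 0 & F *m G' = l *: G'].
  by move/(_ r G SG G_neq0); rewrite prodF0 mul0mx; apply.
elim/last_ind => [|s z IHs] {}G {}SG {}G_neq0.
  by rewrite big_nil mul1mx => G0; rewrite G0 eqxx in G_neq0.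
rewrite big_rcons /= -mulmxE -mulmxA.
have [zG0|zG_neq0] := eqVneq ((F - z%:M) *m G) 0; last exact: IHs (S_shift z G SG) zG_neq0.
exists z, G; split=> //; apply/eqP.
by rewrite -subr_eq0 -mul_scalar_mx -mulmxBl zG0.
Qed.

Definition sylvester n nu (A : 'M[K]_n) (F : 'M[K]_nu) (X : 'M[K]_(n, nu)) :=
  X *m F - A *m X.

Lemma sylvester_is_linear n nu (A : 'M[K]_n) (F : 'M[K]_nu) : linear (sylvester A F).
Proof.
move=> a X Y; rewrite /sylvester mulmxDl mulmxDr -scalemxAl -scalemxAr.
by rewrite scalerBr opprD addrACA.
Qed.

HB.instance Definition _ n nu (A : 'M[K]_n) (F : 'M[K]_nu) :=
  GRing.isLinear.Build K _ _ _ (sylvester A F) (sylvester_is_linear A F).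

Section Sylvester.
Variables (n nu : nat) (A : 'M[K]_n) (F : 'M[K]_nu).

Lemma sylvesterE X Y : sylvester A F X = Y <-> X *m F = A *m X + Y.
Proof.
rewrite /sylvester; split=> [<-|->]; first by rewrite addrC subrK.
by rewrite addrAC subrr add0r.
Qed.

Lemma sylvester_mull X : sylvester A F (A *m X) = A *m sylvester A F X.
Proof. by rewrite /sylvester mulmxBr !mulmxA. Qed.

Hypothesis AF_disjoint : forall l, eigenvalue A l -> ~ eigenvalue F l.

Lemma sylvester_eq0 X : sylvester A F X = 0 -> X = 0.
Proof.
rewrite sylvesterE addr0 => XF; have [r rF prodF0] := prod_eigen_shift_eq0 F.
have prodA_unit : \prod_(z <- r) (A - z%:M) \in unitmx.
  rewrite big_seq; apply: (big_ind (fun M : 'M_n => M \in unitmx)).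
  - exact: unitmx1.
  - by move=> M1 M2 M1u; rewrite -mulmxE unitmx_mul M1u.
  move=> z /rF Fz; apply/negPn/negP; rewrite -eigenvalue_Nunitmx.
  by move=> /AF_disjoint; apply.
by rewrite -(mulKmx prodA_unit X) -(mulmx_prod_shift _ XF) prodF0 !mulmx0.
Qed.

Lemma sylvester_inj : injective (sylvester A F).
Proof. exact: raddf_inj sylvester_eq0. Qed.

End Sylvester.

Lemma sylvester_surj n nu (A : 'M[K]_n) (F : 'M[K]_nu) :
  (forall l, eigenvalue A l -> ~ eigenvalue F l) -> forall P, exists X, sylvester A F X = P.
Proof.
move=> AF_disjoint; apply: (@adjoint_ker0_surj _ _ _ _ _ _ (fun Y => - sylvester F A Y)).
- move=> Y X; rewrite mulNmx mulmxBl mulmxBr !linearB !linearN /= -!mulmxA opprK addrC.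
  by rewrite mxtrace_mulC !mulmxA.
- exact: sylvester_is_linear.
move=> Y /eqP; rewrite oppr_eq0 => /eqP; apply: sylvester_eq0 => l Fl Al.
exact: AF_disjoint Al Fl.
Qed.

End ClosedField.

Section SteadyStateCascade.
Variable C : numClosedFieldType.
Variables (n m p nu : nat) (A : 'M[C]_n) (B : 'M[C]_(n, m)) (Cm : 'M[C]_(p, n))
  (D : 'M[C]_(p, m)) (F : 'M[C]_nu).
Hypothesis hAF : disjoint_spectra A F.

Let hFA : forall l, eigenvalue F l -> ~ eigenvalue A l.
Proof. by move=> l Fl Al; apply: hAF Al Fl. Qed.

Local Notation Pi := (sylv_p A B F).
Local Notation Md := (sylv_d A Cm F).
Local Notation Cp := (SSC_p A B Cm D F).
Local Notation Cd := (SSC_d A B Cm D F).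
Local Notation R := (rosenbrock A B Cm D).

Definition regulator_solvable :=
  forall (P : 'M_(n, nu)) (Q : 'M_(p, nu)), exists (X : 'M_(n, nu)) (Psi : 'M_(m, nu)),
    X *m F = A *m X + B *m Psi + P /\ 0 = Cm *m X + D *m Psi + Q.

Definition dual_regulator_unique :=
  forall (Pb : 'M_(nu, n)) (Qb : 'M_(nu, m)) (M1 M2 : 'M_(nu, n)) (G1 G2 : 'M_(nu, p)),
    (M1 *m A = F *m M1 + G1 *m Cm + Pb /\ 0 = - M1 *m B + G1 *m D + Qb) ->
    (M2 *m A = F *m M2 + G2 *m Cm + Pb /\ 0 = - M2 *m B + G2 *m D + Qb) ->
    M1 = M2 /\ G1 = G2.

Lemma sylv_pE H : sylvester A F (Pi H) = B *m H.
Proof.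
exact: epsilon_spec (inhabits 0) (fun X => sylvester A F X = B *m H) (sylvester_surj hAF _).
Qed.

Lemma sylv_dE G : sylvester F A (Md G) = G *m Cm.
Proof.
exact: epsilon_spec (inhabits 0) (fun M => sylvester F A M = G *m Cm) (sylvester_surj hFA _).
Qed.

Lemma sylv_p_unique H X : sylvester A F X = B *m H -> Pi H = X.
Proof. by move=> XH; apply: (sylvester_inj hAF); rewrite sylv_pE XH. Qed.

Lemma sylv_d_unique G M : sylvester F A M = G *m Cm -> Md G = M.
Proof. by move=> MG; apply: (sylvester_inj hFA); rewrite sylv_dE MG. Qed.

Lemma sylv_p_is_linear : linear Pi.
Proof. by move=> a H1 H2; apply: sylv_p_unique; rewrite linearP /= !sylv_pE linearP. Qed.

HB.instance Definition _ := GRing.isLinear.Build C _ _ _ Pi sylv_p_is_linear.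

Lemma sylv_d_is_linear : linear Md.
Proof.
by move=> a G1 G2; apply: sylv_d_unique; rewrite linearP /= !sylv_dE mulmxDl scalemxAl.
Qed.

HB.instance Definition _ := GRing.isLinear.Build C _ _ _ Md sylv_d_is_linear.

Lemma sylv_d_mull G : Md (F *m G) = F *m Md G.
Proof. by apply: sylv_d_unique; rewrite sylvester_mull sylv_dE mulmxA. Qed.

Lemma SSC_p_is_linear : linear Cp.
Proof. by move=> a H1 H2; rewrite /SSC_p !linearP /= addrACA -scalerDr. Qed.

Lemma SSC_d_is_linear : linear Cd.
Proof.
move=> a G1 G2; rewrite /SSC_d linearP /= !mulmxDl !mulNmx mulmxDl -!scalemxAl.
by rewrite opprD addrACA -scalerN -scalerDr.
Qed.

HB.instance Definition _ := GRing.isLinear.Build C _ _ _ Cd SSC_d_is_linear.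

Lemma SSC_d_mull G : Cd (F *m G) = F *m Cd G.
Proof. by rewrite /SSC_d sylv_d_mull mulmxDr !mulmxA mulmxN. Qed.

Lemma mxtrace_SSC_d G H : \tr (Cd G *m H) = \tr (G *m Cp H).
Proof.
rewrite /SSC_d /SSC_p mulmxDl mulmxDr !mxtraceD; congr (_ + _); last by rewrite mulmxA.
rewrite !mulNmx -mulmxA -sylv_pE mulmxA -sylv_dE /sylvester mulmxBr mulmxBl opprB.
by rewrite !linearB /= !mulmxA [\tr (_ *m F)]mxtrace_mulC mulmxA.
Qed.

Lemma rosenbrock_mul k l (x : 'M_(k, n)) (y : 'M_(k, p)) :
  row_mx x y *m R l = row_mx (x *m (A - l%:M) + y *m Cm) (x *m B + y *m D).
Proof. exact: mul_row_block. Qed.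

Lemma rosenbrock_mul_sylv k l (Y : 'M_(k, n)) (Z : 'M_(k, p)) :
  Y *m (A - l%:M) = Z *m Cm -> row_mx (- Y) Z *m R l = row_mx 0 (- Y *m B + Z *m D).
Proof. by move=> YZ; rewrite rosenbrock_mul mulNmx YZ addNr. Qed.

Lemma sylv_d_left_eigen G l (phi : 'rV_nu) :
  phi *m F = l *: phi -> phi *m Md G *m (A - l%:M) = phi *m G *m Cm.
Proof.
move=> phiF; rewrite mulmxBr mul_mx_scalar scalemxAl -phiF -!mulmxA -mulmxBr.
by rewrite -[_ - _]/(sylvester F A (Md G)) sylv_dE mulmxA.
Qed.

Lemma sylv_d_right_eigen G l : F *m G = l *: G -> Md G *m (A - l%:M) = G *m Cm.
Proof.
move=> FG; rewrite mulmxBr mul_mx_scalar -linearZ /= -FG sylv_d_mull.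
exact: sylv_dE.
Qed.

Lemma mulmx_SSC_d k (X : 'M_(k, nu)) G :
  X *m Cd G = - (X *m Md G) *m B + X *m G *m D.
Proof. by rewrite /SSC_d mulmxDr !mulmxA mulmxN. Qed.

Lemma rosenbrock_mul_left_eigen G l (phi : 'rV_nu) : phi *m F = l *: phi ->
  row_mx (- (phi *m Md G)) (phi *m G) *m R l = row_mx 0 (phi *m Cd G).
Proof.
by move=> phiF; rewrite rosenbrock_mul_sylv ?sylv_d_left_eigen // mulmx_SSC_d.
Qed.

Lemma SSC_d_ker0 :
  (forall l, eigenvalue F l -> row_free (R l)) -> forall G, Cd G = 0 -> G = 0.
Proof.
move=> R_free G CdG0; apply/eqP/contraT => G_neq0.
have Cd_shift z H : Cd H = 0 -> Cd ((F - z%:M) *m H) = 0.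
  move=> CdH0; rewrite mulmxBl mul_scalar_mx linearB linearZ /= SSC_d_mull CdH0.
  by rewrite mulmx0 scaler0 subr0.
have [l [G' [CdG'0 G'_neq0 FG']]] := shift_stable_eigenmx Cd_shift CdG0 G_neq0.
have := rosenbrock_mul_sylv (sylv_d_right_eigen FG'); rewrite -/(Cd G') CdG'0 row_mx0.
move/eqP; rewrite mulmx_free_eq0 ?R_free ?(eigenvalue_mulmx G'_neq0 FG') //.
by rewrite row_mx_eq0 (negPf G'_neq0) andbF.
Qed.

Lemma rosenbrock_row_free : (forall G, Cd G = 0 -> G = 0) ->
  forall l, eigenvalue F l -> row_free (R l).
Proof.
move=> Cd_ker0 l Fl; apply/inj_row_free => u; rewrite -[u]hsubmxK rosenbrock_mul.
set x := lsubmx u; set y := rsubmx u => /eqP; rewrite row_mx_eq0.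
move=> /andP [/eqP xAyC0 /eqP xByD0].
have [w w_neq0 Fw] := eigenvalue_col Fl.
have Md_wy : Md (w *m y) = - (w *m x).
  apply: sylv_d_unique; rewrite linearN /= /sylvester mulmxA Fw -scalemxAl.
  rewrite -mul_mx_scalar -mulmxBr -mulmxA.
  have -> : x *m (A - l%:M) = - (y *m Cm) by apply/eqP; rewrite -addr_eq0 xAyC0.
  by rewrite mulmxN opprK mulmxA.
have y0 : y = 0.
  apply: (cV_mulmx_eq0 w_neq0); apply: Cd_ker0.
  by rewrite /SSC_d Md_wy opprK -!mulmxA -mulmxDr xByD0 mulmx0.
have x0 : x = 0 by apply: (mulmx_shift_eq0 (hFA Fl)); rewrite -xAyC0 y0 mul0mx addr0.
by rewrite x0 y0 row_mx0.
Qed.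

Lemma SSC_d_injP : injective Cd <-> (forall G, Cd G = 0 -> G = 0).
Proof.
split=> [Cd_inj G CdG0|]; last exact: raddf_inj.
by apply: Cd_inj; rewrite CdG0 linear0.
Qed.

Lemma SSC_p_surjP : (forall G, Cd G = 0 -> G = 0) <-> (forall Y, exists H, Cp H = Y).
Proof.
split; first exact: adjoint_ker0_surj mxtrace_SSC_d SSC_p_is_linear.
exact: adjoint_surj_ker0 mxtrace_SSC_d.
Qed.

Lemma regulator_solvableP : (forall Y, exists H, Cp H = Y) <-> regulator_solvable.
Proof.
split=> [Cp_surj P Q | solvable Y].
  have [X0 X0P] := sylvester_surj hAF P; have [H CpH] := Cp_surj (- Q - Cm *m X0).
  exists (X0 + Pi H), H; split.
    by rewrite -addrA; apply/sylvesterE; rewrite linearD /= X0P sylv_pE addrC.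
  have -> : Cm *m (X0 + Pi H) + D *m H = Cm *m X0 + Cp H by rewrite mulmxDr -addrA.
  by rewrite CpH addrCA subrr addr0 addNr.
have [X [H [XF XY]]] := solvable 0 (- Y).
exists H; rewrite /SSC_p (sylv_p_unique (X := X)); last by apply/sylvesterE; rewrite XF addr0.
by apply/eqP; rewrite -subr_eq0 XY.
Qed.

Lemma dual_regulator_uniqueP : (forall G, Cd G = 0 -> G = 0) <-> dual_regulator_unique.
Proof.
split=> [Cd_ker0 Pb Qb M1 M2 G1 G2 [M1A out1] [M2A out2] | unique G CdG0].
  have sylvM1 : sylvester F A M1 = G1 *m Cm + Pb by apply/sylvesterE; rewrite addrA.
  have sylvM2 : sylvester F A M2 = G2 *m Cm + Pb by apply/sylvesterE; rewrite addrA.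
  have MdG : Md (G1 - G2) = M1 - M2.
    apply: sylv_d_unique.
    by rewrite linearB /= sylvM1 sylvM2 opprD addrACA subrr addr0 mulmxBl.
  have out1' : - M1 *m B + G1 *m D = - Qb by apply/eqP; rewrite -addr_eq0 -out1.
  have out2' : - M2 *m B + G2 *m D = - Qb by apply/eqP; rewrite -addr_eq0 -out2.
  have G12 : G1 = G2.
    apply/subr0_eq/Cd_ker0; rewrite /SSC_d MdG.
    transitivity ((- M1 *m B + G1 *m D) - (- M2 *m B + G2 *m D)); last first.
      by rewrite out1' out2' subrr.
    by rewrite !mulNmx !mulmxBl !opprD addrACA.
  by split=> //; apply/subr0_eq; rewrite -MdG G12 subrr linear0.
have [] // := unique 0 0 (Md G) 0 G 0.
- by rewrite !addr0; split; [apply/sylvesterE; rewrite sylv_dE | rewrite -CdG0].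
- by rewrite mulNmx !(mul0mx, mulmx0, oppr0, addr0).
Qed.

Lemma ctrb_eig_SSC_d G l : row_free (R l) -> ctrb_eig F G l -> ctrb_eig F (Cd G) l.
Proof.
move=> Rl_free ctrbG phi phi_neq0 phiF; apply: contra (ctrbG phi phi_neq0 phiF) => /eqP phiCd0.
move: (rosenbrock_mul_left_eigen G phiF); rewrite phiCd0 row_mx0 => /eqP.
by rewrite mulmx_free_eq0 // row_mx_eq0 => /andP [_].
Qed.

Lemma ctrb_eig_of_SSC_d G l : eigenvalue F l -> GT_ker_full F G l ->
  ctrb_eig F (Cd G) l -> ctrb_eig F G l /\ row_free (R l).
Proof.
move=> Fl GF_full ctrbCd; have Al := hFA Fl.
split=> [phi phi_neq0 phiF|].
  apply: contra (ctrbCd phi phi_neq0 phiF) => /eqP phiG0.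
  have phiMd0 : phi *m Md G = 0.
    by apply: (mulmx_shift_eq0 Al); rewrite sylv_d_left_eigen // phiG0 mul0mx.
  by rewrite mulmx_SSC_d phiMd0 phiG0 oppr0 !mul0mx addr0.
apply/inj_row_free => u; rewrite -[u]hsubmxK rosenbrock_mul.
set x := lsubmx u; set y := rsubmx u => /eqP; rewrite row_mx_eq0.
move=> /andP [/eqP xAyC0 /eqP xByD0].
have [phi [phiF phiG]] := GF_full y.
have x_eq : x = - (phi *m Md G).
  apply/eqP; rewrite -addr_eq0; apply/eqP/(mulmx_shift_eq0 Al).
  by rewrite mulmxDl sylv_d_left_eigen // phiG.
have [phi0|phi_neq0] := eqVneq phi 0.
  by rewrite x_eq -phiG phi0 !mul0mx oppr0 row_mx0.
by move: (ctrbCd phi phi_neq0 phiF); rewrite mulmx_SSC_d -x_eq phiG xByD0 eqxx.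
Qed.

End SteadyStateCascade.

Theorem theorem1 (C : numClosedFieldType) (n m p nu : nat)
    (A : 'M[C]_n) (B : 'M[C]_(n, m)) (Cm : 'M[C]_(p, n)) (D : 'M[C]_(p, m))
    (F : 'M[C]_nu)
    (hAF : disjoint_spectra A F) :
  let cond_i :=
    forall l : C, eigenvalue F l -> row_free (rosenbrock A B Cm D l) in
  let cond_ii :=
    forall (P : 'M[C]_(n, nu)) (Q : 'M[C]_(p, nu)),
      exists (Pi : 'M[C]_(n, nu)) (Psi : 'M[C]_(m, nu)),
        Pi *m F = A *m Pi + B *m Psi + P /\ 0 = Cm *m Pi + D *m Psi + Q in
  let cond_iii :=
    forall (Pb : 'M[C]_(nu, n)) (Qb : 'M[C]_(nu, m))
           (M1 M2 : 'M[C]_(nu, n)) (G1 G2 : 'M[C]_(nu, p)),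
      (M1 *m A = F *m M1 + G1 *m Cm + Pb /\ 0 = - M1 *m B + G1 *m D + Qb) ->
      (M2 *m A = F *m M2 + G2 *m Cm + Pb /\ 0 = - M2 *m B + G2 *m D + Qb) ->
      M1 = M2 /\ G1 = G2 in
  let cond_iv :=
    forall Y : 'M[C]_(p, nu), exists H : 'M[C]_(m, nu), SSC_p A B Cm D F H = Y in
  let cond_v := injective (SSC_d A B Cm D F) in
  let cond_i_plus :=
    forall l : C, eigenvalue F l -> 0 <= 'Re l -> row_free (rosenbrock A B Cm D l) in
  [/\ (cond_i <-> cond_ii), (cond_i <-> cond_iii), (cond_i <-> cond_iv),
      (cond_i <-> cond_v) &
   forall G : 'M[C]_(nu, p),
   [/\ (controllable F G -> cond_i -> controllable F (SSC_d A B Cm D F G)),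
       (stabilizable F G -> cond_i_plus -> stabilizable F (SSC_d A B Cm D F G)),
       ((forall l : C, eigenvalue F l -> GT_ker_full F G l) ->
          controllable F (SSC_d A B Cm D F G) -> controllable F G /\ cond_i) &
       ((forall l : C, eigenvalue F l -> 0 <= 'Re l -> GT_ker_full F G l) ->
          stabilizable F (SSC_d A B Cm D F G) -> stabilizable F G /\ cond_i_plus)]].
Proof.
move=> cond_i cond_ii cond_iii cond_iv cond_v cond_i_plus.
have i_ker0 : cond_i <-> forall G, SSC_d A B Cm D F G = 0 -> G = 0.
  by split; [apply: SSC_d_ker0 | apply: rosenbrock_row_free].
have ker0_iv : (forall G, SSC_d A B Cm D F G = 0 -> G = 0) <-> cond_iv.
  exact: SSC_p_surjP.
have iv_ii : cond_iv <-> cond_ii by exact: regulator_solvableP.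
split.
- exact: iff_trans i_ker0 (iff_trans ker0_iv iv_ii).
- by apply: iff_trans i_ker0 _; apply: dual_regulator_uniqueP.
- exact: iff_trans i_ker0 ker0_iv.
- by apply: iff_trans i_ker0 (iff_sym _); apply: SSC_d_injP.
move=> G; split.
- by move=> ctrbG R_free l Fl; apply: ctrb_eig_SSC_d (R_free l Fl) (ctrbG l Fl).
- by move=> stabG R_free l Fl Rel; apply: ctrb_eig_SSC_d (R_free l Fl Rel) (stabG l Fl Rel).
- move=> GF_full ctrbCd; rewrite /cond_i.
  by split=> l Fl; have [] := ctrb_eig_of_SSC_d hAF Fl (GF_full l Fl) (ctrbCd l Fl).
- move=> GF_full stabCd; rewrite /cond_i_plus.
  split=> l Fl Rel.
  all: by have [] := ctrb_eig_of_SSC_d hAF Fl (GF_full l Fl Rel) (stabCd l Fl Rel).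
Qed.
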